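(* Let $R$ be a Noetherian ring, $I\subseteq R$ an ideal, and $J_1=(f_1,\ldots,f_m)\subseteq I$, $J_2=(g_1,\ldots,g_m)\subseteq I$ ideals with $f_i-g_i\in I^2$ for $i=1,\ldots,m$, and assume $J_1\subseteq I$ is Aluffi torsion-free. Let $\mathcal Z_1,\mathcal Z_2\subseteq R^m$ be the syzygy modules of $(f_1,\dots,f_m)$ and $(g_1,\dots,g_m)$. Then $J_2\subseteq I$ is Aluffi torsion-free if and only if $\mathcal Z_1^*=\mathcal Z_2^*$ in $\mathrm{gr}_I(R^m)$.
   Context: A pair of ideals $J\subseteq I$ in a ring $R$ is called Aluffi torsion-free if $J\cap I^n=JI^{n-1}$ for all $n\ge1$ (with $I^0=R$). $\mathrm{gr}_I(R^m)=\bigoplus_{n\ge0}I^nR^m/I^{n+1}R^m$. For $0\ne a\in R^m$ let $n$ be the largest integer with $a\in I^nR^m$ (if it exists), and $a^*$ the class of $a$ in $I^nR^m/I^{n+1}R^m$ (and $a^*=0$ if $a\in\bigcap_n I^nR^m$). For a submodule $\mathcal Z\subseteq R^m$, its form module $\mathcal Z^*$ is the graded $\mathrm{gr}_I(R)$-submodule of $\mathrm{gr}_I(R^m)$ generated by $\{a^*:a\in\mathcal Z\}$. The syzygy module of $(f_1,\dots,f_m)$ is $\{(a_1,\ldots,a_m)\in R^m:\sum a_if_i=0\}$. *)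

From HB Require Import structures.
From mathcomp Require Import all_boot all_order all_algebra.
From Stdlib Require List.
Set Implicit Arguments. Unset Strict Implicit. Unset Printing Implicit Defensive.
Import GRing.Theory.
Local Open Scope ring_scope.

Section Defs.
Variable R : comPzRingType.

Definition is_ideal (I : R -> Prop) : Prop :=
  [/\ I 0, (forall x y, I x -> I y -> I (x + y)) & (forall r x, I x -> I (r * x))].

Definition noetherian : Prop :=
  forall c : nat -> R -> Prop, (forall n, is_ideal (c n)) ->
    (forall n x, c n x -> c n.+1 x) ->
    exists N, forall n x, (N <= n)%N -> c n x -> c N x.

Definition prod_ideal (A B : R -> Prop) (x : R) : Prop :=
  exists s : seq (R * R), (forall p, p \in s -> A p.1 /\ B p.2) /\
    x = \sum_(p <- s) p.1 * p.2.

Fixpoint ideal_pow (I : R -> Prop) (n : nat) : R -> Prop :=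
  match n with
  | 0 => fun _ => True
  | n'.+1 => prod_ideal (ideal_pow I n') I
  end.

Definition gen_ideal (m : nat) (f : 'I_m -> R) (x : R) : Prop :=
  exists r : 'I_m -> R, x = \sum_i r i * f i.

Definition aluffi_tf (J I : R -> Prop) : Prop :=
  forall n, (0 < n)%N -> forall x, (J x /\ ideal_pow I n x) <-> prod_ideal J (ideal_pow I n.-1) x.

Definition syzygy (m : nat) (f : 'I_m -> R) (a : 'I_m -> R) : Prop :=
  \sum_i a i * f i = 0.

Definition vpow (I : R -> Prop) (m n : nat) (a : 'I_m -> R) : Prop :=
  forall i, ideal_pow I n (a i).

(* Homogeneous degree-n component of the form module Z^* in gr_I(R^m):
   x (with x ∈ I^n R^m) represents a class in I^n R^m / I^(n+1) R^m lying in Z^*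
   iff that class is a finite sum of products r^* a^*, with r ∈ I^k (class of degree k
   in gr_I(R)) and a ∈ Z whose initial form a^* has degree exactly n-k
   (a ∈ I^(n-k) R^m, a ∉ I^(n-k+1) R^m). *)
Definition form_module (I : R -> Prop) (m : nat) (Z : ('I_m -> R) -> Prop)
    (n : nat) (x : 'I_m -> R) : Prop :=
  vpow I n x /\
  exists s : seq (nat * R * ('I_m -> R)),
    (forall t, List.In t s ->
       [/\ (t.1.1 <= n)%N, ideal_pow I t.1.1 t.1.2, Z t.2,
           vpow I (n - t.1.1) t.2 & ~ vpow I (n - t.1.1).+1 t.2]) /\
    vpow I n.+1 (fun i => x i - \sum_(t <- s) t.1.2 * t.2 i).

End Defs.

(* For x in I^n R^m, the condition sum_i x_i f_i in I^(n+2) says that the class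
   of x in degree n of gr_I(R^m) kills the degree-one initial forms f_i^*; call
   such x an initial syzygy.  Every element of the form module Z^* is one, and
   the condition only depends on the f_i modulo I^2.  Conversely, (f) is Aluffi
   torsion-free iff every initial syzygy lies in Z^*_n + I^(n+1) R^m: this is
   what pushes the coefficients of an element of (f) ∩ I^n up one degree at a
   time.  So if (f) is torsion-free, Z_f^* is the module of initial syzygies,
   which is the same for f and g, and (g) is torsion-free iff Z_g^* equals it. *)

From HB Require Import structures.
From mathcomp Require Import all_boot all_order all_algebra.
From Stdlib Require Import Classical.
Set Implicit Arguments. Unset Strict Implicit. Unset Printing Implicit Defensive.
Import GRing.Theory.
Local Open Scope ring_scope.

Section IdealPowers.
Variable R : comPzRingType.
Implicit Types (I J : R -> Prop) (x y : R).

Lemma ideal_sum J (T : Type) (s : seq T) (P : pred T) (F : T -> R) :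
  is_ideal J -> (forall i, P i -> J (F i)) -> J (\sum_(i <- s | P i) F i).
Proof. by case=> J0 JD _ JF; apply: big_ind. Qed.

Lemma ideal_sub J x y : is_ideal J -> J x -> J y -> J (x - y).
Proof. by case=> _ JD JM Jx Jy; apply: JD => //; rewrite -mulN1r; apply: JM. Qed.

Lemma prod_ideal_is_ideal J (B : R -> Prop) :
  (forall r x, J x -> J (r * x)) -> is_ideal (prod_ideal J B).
Proof.
move=> JM; split.
- by exists [::]; rewrite big_nil.
- move=> _ _ [s [hs ->]] [t [ht ->]]; exists (s ++ t); rewrite big_cat.
  by split=> // p; rewrite mem_cat => /orP[/hs | /ht].
- move=> r _ [s [hs ->]]; exists [seq (r * p.1, p.2) | p <- s]; split.
  + by move=> _ /mapP[p /hs[Jp Bp] ->]; split=> //; apply: JM.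
  + by rewrite big_map mulr_sumr; apply: eq_bigr => p _; rewrite mulrA.
Qed.

Lemma ideal_pow_mull I n r x : ideal_pow I n x -> ideal_pow I n (r * x).
Proof.
elim: n r x => [//|n IH] r x /=.
by case: (@prod_ideal_is_ideal (ideal_pow I n) I IH) => _ _; apply.
Qed.

Lemma ideal_pow_is_ideal I n : is_ideal (ideal_pow I n).
Proof.
case: n => [|n]; first by split.
by apply: prod_ideal_is_ideal => r x; apply: ideal_pow_mull.
Qed.

Lemma ideal_pow1 I x : I x -> ideal_pow I 1 x.
Proof.
by move=> Ix; exists [:: (1, x)]; rewrite big_seq1 mul1r; split=> // p /[!inE] /eqP->.
Qed.

Lemma ideal_pow_mul I a b x y :
  ideal_pow I a x -> ideal_pow I b y -> ideal_pow I (a + b) (x * y).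
Proof.
move=> Ix; elim: b y => [|b IH] y; first by rewrite addn0 mulrC => _; apply: ideal_pow_mull.
rewrite addnS => -[s [hs ->]]; exists [seq (x * p.1, p.2) | p <- s]; split.
- by move=> _ /mapP[p /hs[Ip1 Ip2] ->]; split=> //; apply: IH.
- by rewrite big_map mulr_sumr; apply: eq_bigr => p _; rewrite mulrA.
Qed.

Lemma ideal_powS I n x : ideal_pow I n.+1 x -> ideal_pow I n x.
Proof.
elim: n x => [//|n IH] _ [s [hs ->]]; exists s; split=> // p /hs[Ip1 Ip2].
by split=> //; apply: IH.
Qed.

Lemma ideal_pow_le I k n x : (k <= n)%N -> ideal_pow I n x -> ideal_pow I k x.
Proof.
move=> /subnKC <-; elim: (n - k)%N x => [|d IH] x; first by rewrite addn0.
by rewrite addnS => /ideal_powS /IH.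
Qed.

End IdealPowers.

Section GeneratedIdeal.
Variables (R : comPzRingType) (m : nat) (f : 'I_m -> R).

Lemma gen_ideal_is_ideal : is_ideal (gen_ideal f).
Proof.
split.
- by exists (fun=> 0); rewrite big1 // => i _; rewrite mul0r.
- move=> _ _ [r ->] [r' ->]; exists (fun i => r i + r' i).
  by rewrite -big_split; apply: eq_bigr => i _; rewrite mulrDl.
- move=> s _ [r ->]; exists (fun i => s * r i).
  by rewrite mulr_sumr; apply: eq_bigr => i _; rewrite mulrA.
Qed.

Lemma gen_ideal_gen i : gen_ideal f (f i).
Proof.
exists (fun j => (j == i)%:R); rewrite (bigD1 i) //= eqxx mul1r big1 ?addr0 //.
by move=> j /negbTE->; rewrite mul0r.
Qed.

Lemma prod_gen_idealP (B : R -> Prop) y :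
  is_ideal B ->
  prod_ideal (gen_ideal f) B y <->
  exists2 b : 'I_m -> R, (forall i, B (b i)) & y = \sum_i b i * f i.
Proof.
move=> idB; split=> [[s [hs ->]] | [b Bb ->]]; last first.
  exists [seq (f i, b i) | i <- enum 'I_m]; split.
    by move=> _ /mapP[i _ ->]; split; [apply: gen_ideal_gen | apply: Bb].
  by rewrite big_map big_enum; apply: eq_bigr => i _; rewrite mulrC.
elim: s hs => [|p s IH] hs.
  exists (fun=> 0); first by case: idB.
  by rewrite big_nil big1 // => i _; rewrite mul0r.
rewrite big_cons; have [[c ->] Bp] := hs p (mem_head _ _).
have [b Bb ->] := IH (fun q qs => hs q (mem_behead (s := p :: s) qs)).
exists (fun i => p.2 * c i + b i).
  by case: idB => _ BD BM i; apply: BD => //; rewrite mulrC; apply: BM.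
rewrite mulr_suml -big_split; apply: eq_bigr => i _.
by rewrite mulrDl mulrAC [p.2 * _]mulrC.
Qed.

Lemma sum_syzygy_comb (s : seq (nat * R * ('I_m -> R))) :
  (forall t, List.In t s -> syzygy f t.2) ->
  \sum_i (\sum_(t <- s) t.1.2 * t.2 i) * f i = 0.
Proof.
elim: s => [|t s IH] syz; first by rewrite big1 // => i _; rewrite big_nil mul0r.
under eq_bigr do rewrite big_cons mulrDl -mulrA.
rewrite big_split /= -mulr_sumr IH => [|u su]; last by apply: syz; right.
by rewrite (syz t (or_introl erefl)) mulr0 addr0.
Qed.

End GeneratedIdeal.

Section InitialSyzygies.
Variables (R : comPzRingType) (I : R -> Prop) (m : nat).
Implicit Types (f g x : 'I_m -> R).

Definition initial_syzygy f n x :=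
  vpow I n x /\ ideal_pow I n.+2 (\sum_i x i * f i).

Lemma form_module_initial_syzygy f n x :
  (forall i, I (f i)) -> form_module I (syzygy f) n x -> initial_syzygy f n x.
Proof.
move=> If [Ix [s [hs hr]]]; split=> //.
have -> : \sum_i x i * f i = \sum_i (x i - \sum_(t <- s) t.1.2 * t.2 i) * f i.
  under [RHS]eq_bigr do rewrite mulrBl.
  by rewrite sumrB sum_syzygy_comb ?subr0 // => t /hs[].
apply: ideal_sum; first exact: ideal_pow_is_ideal.
by move=> i _; rewrite -addn1; exact: ideal_pow_mul (hr i) (ideal_pow1 (If i)).
Qed.

Lemma initial_syzygy_perturb f g n x :
  (forall i, ideal_pow I 2 (f i - g i)) -> initial_syzygy f n x -> initial_syzygy g n x.
Proof.
move=> fg [Ix Is]; split=> //.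
have -> : \sum_i x i * g i = \sum_i x i * f i - \sum_i x i * (f i - g i).
  by rewrite -sumrB; apply: eq_bigr => i _; rewrite mulrBr opprB addrC subrK.
apply: ideal_sub Is _; first exact: ideal_pow_is_ideal.
apply: ideal_sum; first exact: ideal_pow_is_ideal.
by move=> i _; rewrite -addn2; apply: ideal_pow_mul.
Qed.

Lemma form_module_raise f n x :
  form_module I (syzygy f) n x ->
  exists2 x', vpow I n.+1 x' & \sum_i x' i * f i = \sum_i x i * f i.
Proof.
move=> [_ [s [hs hr]]]; exists (fun i => x i - \sum_(t <- s) t.1.2 * t.2 i) => //.
under eq_bigr do rewrite mulrBl.
by rewrite sumrB sum_syzygy_comb ?subr0 // => t /hs[].
Qed.

Lemma aluffi_tf_initial_syzygy f n x :
  aluffi_tf (gen_ideal f) I -> initial_syzygy f n x -> form_module I (syzygy f) n x.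
Proof.
move=> tf [Ix Is]; split=> //.
have /prod_gen_idealP[|b Ib sum_b] :=
  proj1 (tf n.+2 erefl _) (conj (ex_intro _ x erefl) Is); first exact: ideal_pow_is_ideal.
pose a i := x i - b i.
have a_syz : syzygy f a.
  by rewrite /syzygy; under eq_bigr do rewrite mulrBl; rewrite sumrB -sum_b subrr.
case: (classic (vpow I n.+1 a)) => [Ia | Na].
  exists [::]; split=> // i; rewrite big_nil subr0 -(subrK (b i) (x i)).
  by case: (ideal_pow_is_ideal I n.+1) => _ ID _; apply: ID (Ia i) (Ib i).
(* the initial form of a has degree exactly n; x differs from it by b in I^(n+1) *)
exists [:: (0%N, 1, a)]; split.
- move=> _ [<- | []] /=; rewrite subn0; split=> // i.
  exact: ideal_sub (ideal_pow_is_ideal I n) (Ix i) (ideal_powS (Ib i)).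
- by move=> i; rewrite big_seq1 /= mul1r /a opprB addrC subrK; apply: Ib.
Qed.

Lemma initial_syzygy_aluffi_tf f :
  (forall y, gen_ideal f y -> I y) ->
  (forall n x, initial_syzygy f n x -> form_module I (syzygy f) n x) ->
  aluffi_tf (gen_ideal f) I.
Proof.
move=> JI raise [//|k] _ y; rewrite (prod_gen_idealP _ _ (ideal_pow_is_ideal I k)).
split=> [[[c y_c] Iy] | [b Ib ->]].
  suff [c' Ic' ->] : exists2 c' : 'I_m -> R, vpow I k c' & y = \sum_i c' i * f i.
    by exists c'.
  elim: k Iy => [|k IH] Iy; first by exists c.
  have [c' Ic' y_c'] := IH (ideal_powS Iy).
  have [|c'' Ic'' sum_c''] := form_module_raise (raise k c' _).
    by split; rewrite // -y_c'.
  by exists c''; rewrite // y_c' sum_c''.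
split; first by exists b.
apply: ideal_sum; first exact: ideal_pow_is_ideal.
move=> i _; rewrite -addn1; apply: ideal_pow_mul (Ib i) (ideal_pow1 _).
exact/JI/gen_ideal_gen.
Qed.

End InitialSyzygies.

Theorem corollary2p8 (R : comPzRingType) (I : R -> Prop) (m : nat)
    (f g : 'I_m -> R) :
  noetherian R ->
  is_ideal I ->
  (forall x, gen_ideal f x -> I x) ->
  (forall x, gen_ideal g x -> I x) ->
  (forall i, ideal_pow I 2 (f i - g i)) ->
  aluffi_tf (gen_ideal f) I ->
  (aluffi_tf (gen_ideal g) I <->
   (forall (n : nat) (x : 'I_m -> R),
      form_module I (syzygy f) n x <-> form_module I (syzygy g) n x)).
Proof.
move=> _ _ JfI JgI fg tf_f.
have fI i : I (f i) by apply/JfI/gen_ideal_gen.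
have gI i : I (g i) by apply/JgI/gen_ideal_gen.
have gf i : ideal_pow I 2 (g i - f i) by rewrite -opprB -mulN1r; apply: ideal_pow_mull.
have form_f n x : form_module I (syzygy f) n x -> initial_syzygy I g n x.
  by move/(form_module_initial_syzygy fI)/initial_syzygy_perturb; apply.
have init_g n x : initial_syzygy I g n x -> form_module I (syzygy f) n x.
  by move/(initial_syzygy_perturb gf)/(aluffi_tf_initial_syzygy tf_f).
split=> [tf_g n x | form_eq].
- split=> [/form_f | ]; first exact: aluffi_tf_initial_syzygy.
  by move/(form_module_initial_syzygy gI)/init_g.
- by apply: initial_syzygy_aluffi_tf JgI _ => n x /init_g /form_eq.
Qed.
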